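(* Let $x_1,\dots,x_N\in\mathbb{R}^q$, let $\hat x_0\in\mathbb{R}^q$ be arbitrary, and define the median shift sequence by $$C_n=\{i: \|\hat x_n-x_i\|_1<1\},\qquad \hat x_{n+1}=\mathrm{Med}(\{x_i: i\in C_n\}),$$ where $\mathrm{Med}$ is the coordinatewise median defined in the context (and $\mathrm{Med}(\emptyset)=c$ for a fixed point $c\in\mathbb{R}^q$). Then $(\hat x_n)$ is stationary (constant from some index on), for any initialization $\hat x_0$.
   Context: $\|\cdot\|_1$ is the $L_1$ norm on $\mathbb{R}^q$. For a nonempty finite family of points of $\mathbb{R}^q$ (indexed by a subset of $\{1,\dots,N\}$), $\mathrm{Med}$ returns the point whose $k$-th coordinate is the median of the $k$-th coordinates of the family, where for an even number of values the median is taken as the average of the two middle values; thus $\mathrm{Med}$ depends only on the index set and is a minimizer of $x\mapsto\sum_i\|x-x_i\|_1$ over the family. *)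

(* Reals are modelled by an arbitrary real field R
   (realFieldType), which includes the real numbers; the statement is
   purely order-theoretic/algebraic. *)
From HB Require Import structures.
From mathcomp Require Import all_boot all_order all_algebra.
Set Implicit Arguments. Unset Strict Implicit. Unset Printing Implicit Defensive.
Import Order.TTheory GRing.Theory Num.Theory.
Local Open Scope ring_scope.

Section MedianShift.
Variable R : realFieldType.

Definition l1dist (q : nat) (x y : 'rV[R]_q) : R :=
  \sum_(k < q) `|x ord0 k - y ord0 k|.

Definition median (s : seq R) : R :=
  let t := sort <=%R s in
  let n := size t in
  if odd n then t`_(n./2)
  else (t`_(n./2).-1 + t`_(n./2)) / 2%:R.

Definition Med (q N : nat) (c : 'rV[R]_q) (X : 'I_N -> 'rV[R]_q)
    (C : {set 'I_N}) : 'rV[R]_q :=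
  if C == set0 then c
  else \row_(k < q) median [seq X i ord0 k | i <- enum C].

Definition window (q N : nat) (X : 'I_N -> 'rV[R]_q) (xh : 'rV[R]_q)
    : {set 'I_N} :=
  [set i | l1dist xh (X i) < 1].

Fixpoint median_shift (q N : nat) (c : 'rV[R]_q) (X : 'I_N -> 'rV[R]_q)
    (x0 : 'rV[R]_q) (n : nat) : 'rV[R]_q :=
  match n with
  | 0 => x0
  | n'.+1 => Med c X (window X (median_shift c X x0 n'))
  end.

End MedianShift.

From HB Require Import structures.
From mathcomp Require Import all_boot all_order all_algebra.
From mathcomp Require Import lra zify.
Set Implicit Arguments. Unset Strict Implicit. Unset Printing Implicit Defensive.
Import Order.TTheory GRing.Theory Num.Theory.
Local Open Scope ring_scope.

(* The coordinatewise median of a family minimizes the sum of L1 distances to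
   the family. Hence V x := sum_i min(|x - x_i|_1, 1) never increases along the
   sequence: points inside the current window are replaced by their median,
   which can only lower their total distance, while points outside contribute
   at most 1 afterwards. If V stays constant, no point outside the old window
   enters the new one, so the window can only shrink, and an unchanged window
   gives an unchanged median. Since the iterates are medians of subfamilies,
   V takes finitely many values on them, and the pair (V, size of the window)
   cannot decrease forever. *)

Section MedianMinimizes.
Variable R : realFieldType.
Implicit Types (s t : seq R) (m a : R).

(* Moving from [m] to [a >= m] gains [a - m] on every value [<= m] and loses
   at most [a - m] on every other value. *)
Lemma sum_abs_sub_le_shift s m a : m <= a ->
  \sum_(y <- s) `|m - y| <=
  \sum_(y <- s) `|a - y| + (a - m) * ((size s)%:R - 2 * (count (<= m) s)%:R).
Proof.
move=> le_ma; elim: s => [|y s IH]; first by rewrite !big_nil /= mulr0 subr0 mulr0 addr0.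
rewrite !big_cons /= natrD -addn1 natrD.
have [le_ym | lt_my] := leP y m; rewrite /= ?mulr1n ?mulr0n ?add0r.
- rewrite (ger0_norm (_ : 0 <= m - y)) ?subr_ge0 //.
  rewrite (ger0_norm (_ : 0 <= a - y)) ?subr_ge0 ?(le_trans le_ym) //.
  move: IH; set A := \sum_(_ <- _) _; set B := \sum_(_ <- _) _.
  set c := (count _ _)%:R; set n := (size s)%:R => IH; nra.
- have := ler_distD a m y; rewrite [`|m - a|]distrC (ger0_norm (_ : 0 <= a - m)) ?subr_ge0 //.
  move: IH; set A := \sum_(_ <- _) _; set B := \sum_(_ <- _) _.
  set c := (count _ _)%:R; set n := (size s)%:R => IH tri; nra.
Qed.

Lemma sum_abs_sub_min_of_split s m :
  (2 * count (< m) s <= size s <= 2 * count (<= m) s)%N ->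
  forall a, \sum_(y <- s) `|m - y| <= \sum_(y <- s) `|a - y|.
Proof.
have split_right t b a : b <= a -> (size t <= 2 * count (<= b) t)%N ->
    \sum_(y <- t) `|b - y| <= \sum_(y <- t) `|a - y|.
  move=> le_ba; rewrite -(ler_nat R) natrM -subr_le0 => half.
  apply: le_trans (sum_abs_sub_le_shift t le_ba) _; rewrite gerDl.
  by apply: mulr_ge0_le0; rewrite ?subr_ge0.
case/andP=> below above a; have [le_ma | lt_am] := leP m a; first exact: split_right.
have reflect_sum b : \sum_(y <- map -%R s) `|- b - y| = \sum_(y <- s) `|b - y|.
  by rewrite big_map; apply: eq_bigr => y _; rewrite -opprD normrN.
rewrite -!reflect_sum; apply: split_right; first by rewrite lerN2 ltW.
rewrite count_map size_map (eq_count (a2 := predC (< m))) => [|y]; last first.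
  by rewrite /= lerN2 leNgt.
by rewrite -(count_predC (< m) s) in below *; lia.
Qed.

Lemma sorted_count_lt_nth t j : sorted <=%R t -> (j < size t)%N ->
  (count (< t`_j)%R t <= j)%N.
Proof.
move=> st lt_j; rewrite leqNgt; apply/negP => lt_jc.
have j_in : (j < size (take (count (< t`_j)%R t) t))%N.
  by rewrite size_take_min leq_min lt_jc.
have := mem_nth 0 j_in; rewrite nth_take // -(sorted_filter_lt _ st).
by rewrite mem_filter ltxx.
Qed.

Lemma sorted_count_le_nth t j : sorted <=%R t -> (j < size t)%N ->
  (j < count (<= t`_j)%R t)%N.
Proof.
move=> st lt_j; rewrite ltnNge; apply/negP => le_cj.
have j_in : (j - count (<= t`_j)%R t < size (drop (count (<= t`_j)%R t) t))%N.
  by rewrite size_drop; lia.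
have := mem_nth 0 j_in; rewrite nth_drop subnKC // -(sorted_filter_gt _ st).
by rewrite mem_filter ltxx.
Qed.

Lemma median_split s :
  (2 * count (< median s) s <= size s <= 2 * count (<= median s) s)%N.
Proof.
have perm_sort_s : perm_eq (sort <=%R s) s by rewrite perm_sort.
rewrite -(perm_size perm_sort_s) -!(permP perm_sort_s) /median.
move: (sort_le_sorted s); set t := sort _ s => st; clearbody t.
have [/eqP|pos] := posnP (size t); first by rewrite size_eq0 => /eqP ->.
have := odd_double_half (size t); set k := (size t)./2; clearbody k.
case: ifP => _ /=; rewrite -addnn => def_n.
- have lt_k : (k < size t)%N by lia.
  have := sorted_count_lt_nth st lt_k; have := sorted_count_le_nth st lt_k.
  move: (count _ t) (count _ t) => c1 c2; lia.
- have lt_k : (k < size t)%N by lia.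
  have lt_k' : (k.-1 < size t)%N by lia.
  have [le_lo le_hi] := midf_le (le_sorted_leq_nth 0 st lt_k' lt_k (leq_pred _)).
  have := sorted_count_lt_nth st lt_k; have := sorted_count_le_nth st lt_k'.
  have := sub_count (fun y (lt_ym : y < _) => lt_le_trans lt_ym le_hi) t.
  have := sub_count (fun y (le_ym : y <= _) => le_trans le_ym le_lo) t.
  move: (count _ t) (count _ t) (count _ t) (count _ t) => c1 c2 c3 c4; lia.
Qed.

Lemma median_sum_abs_min s a :
  \sum_(y <- s) `|median s - y| <= \sum_(y <- s) `|a - y|.
Proof. exact: sum_abs_sub_min_of_split (median_split s) a. Qed.

End MedianMinimizes.

Lemma Med_sum_l1dist_min (R : realFieldType) (q N : nat) (c : 'rV[R]_q)
    (X : 'I_N -> 'rV[R]_q) (C : {set 'I_N}) (x : 'rV[R]_q) :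
  \sum_(i in C) l1dist (Med c X C) (X i) <= \sum_(i in C) l1dist x (X i).
Proof.
rewrite /Med; case: eqP => [->|_]; first by rewrite !big_set0.
rewrite /l1dist exchange_big [Y in _ <= Y]exchange_big /=; apply: ler_sum => k _.
rewrite mxE -!big_enum /=.
by have := median_sum_abs_min [seq X i ord0 k | i <- enum C] (x ord0 k); rewrite !big_map.
Qed.

Lemma iter_eventually_const (T : Type) (f : T -> T) (mu : T -> nat) :
  (forall x, (mu (f x) < mu x)%N \/ f (f x) = f x) ->
  forall x, exists n0, forall n, (n0 <= n)%N -> iter n f x = iter n0 f x.
Proof.
move=> step x; have [k] := ubnP (mu x); elim: k x => // k IH x /ltnSE le_mu.
case: (step x) => [lt_mu | fixed].
- have [n0 const] := IH (f x) (leq_trans lt_mu le_mu).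
  by exists n0.+1 => -[|n] //; rewrite ltnS !iterSr; exact: const.
- by exists 1%N => -[|n] // _; rewrite iterSr iter_fix.
Qed.

Section Lyapunov.
Variables (R : realFieldType) (T : Type) (N : nat).
Variables (d : T -> 'I_N -> R) (r : R) (center : {set 'I_N} -> T).
Hypothesis center_min :
  forall (C : {set 'I_N}) x, \sum_(i in C) d (center C) i <= \sum_(i in C) d x i.

Definition nbhd x := [set i | d x i < r].
Definition recenter x := center (nbhd x).
Definition lyapunov x := \sum_(i < N) Num.min (d x i) r.

Let sub_min_ge0 x i : 0 <= r - Num.min (d x i) r.
Proof. by rewrite subr_ge0 ge_min lexx orbT. Qed.

Lemma lyapunov_recenter_gap x :
  \sum_(i | i \notin nbhd x) (r - Num.min (d (recenter x) i) r)
    <= lyapunov x - lyapunov (recenter x).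
Proof.
set y := recenter x.
have -> : lyapunov x = \sum_(i in nbhd x) d x i + \sum_(i | i \notin nbhd x) r.
  rewrite /lyapunov (bigID (mem (nbhd x))) /=; congr (_ + _); apply: eq_bigr => i.
    by rewrite inE => /ltW /min_idPl.
  by rewrite inE -leNgt => /min_idPr.
have -> : lyapunov y = \sum_(i in nbhd x) Num.min (d y i) r
                       + \sum_(i | i \notin nbhd x) Num.min (d y i) r.
  by rewrite /lyapunov (bigID (mem (nbhd x))).
have : \sum_(i in nbhd x) Num.min (d y i) r <= \sum_(i in nbhd x) d x i.
  by apply: le_trans (center_min _ x); apply: ler_sum => i _; rewrite ge_min lexx.
rewrite sumrB; move: (\sum_(i in _) _) (\sum_(i in _) _) => A B.
move: (\sum_(i | _) r) (\sum_(i | _) Num.min _ _) => C D; lra.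
Qed.

Lemma lyapunov_recenter_le x : lyapunov (recenter x) <= lyapunov x.
Proof.
rewrite -subr_ge0; apply: le_trans (lyapunov_recenter_gap x).
exact: sumr_ge0.
Qed.

Lemma nbhd_recenter_sub x :
  lyapunov x <= lyapunov (recenter x) -> nbhd (recenter x) \subset nbhd x.
Proof.
rewrite -subr_le0 => gap_le0.
have gap0 : \sum_(i | i \notin nbhd x) (r - Num.min (d (recenter x) i) r) = 0.
  by apply/le_anti; rewrite (le_trans (lyapunov_recenter_gap x)) // sumr_ge0.
apply/subsetP => i; apply: contraLR => /(psumr_eq0P (fun i _ => sub_min_ge0 _ i) gap0).
by move/eqP; rewrite subr_eq0 eq_sym => /eqP/min_idPr; rewrite inE -leNgt.
Qed.

Definition recenter_rank x :=
  (#|[set C | (lyapunov (center C) < lyapunov x)%R]| * N.+1 + #|nbhd x|)%N.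

Lemma recenter_rank_decr x :
  (recenter_rank (recenter x) < recenter_rank x)%N \/
  recenter (recenter x) = recenter x.
Proof.
set y := recenter x; rewrite /recenter_rank.
have nbhd_le_N z : (#|nbhd z| <= N)%N by rewrite -[X in (_ <= X)%N]card_ord max_card.
have [lt_yx | ge_yx] := ltP (lyapunov y) (lyapunov x).
- left; have : (#|[set C | (lyapunov (center C) < lyapunov y)%R]|
                 < #|[set C | (lyapunov (center C) < lyapunov x)%R]|)%N.
    apply: proper_card; apply/properP; split.
      by apply/subsetP => C; rewrite !inE => /lt_trans; apply.
    by exists (nbhd x); rewrite !inE ?ltxx.
  have := nbhd_le_N x; have := nbhd_le_N y.
  move: (#|_|) (#|_|) (#|_|) (#|_|) => a b u v; nia.
- have eq_yx : lyapunov y = lyapunov x.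
    by apply/le_anti; rewrite ge_yx lyapunov_recenter_le.
  have [lt_card | ge_card] := ltnP #|nbhd y| #|nbhd x|.
    by left; rewrite eq_yx ltn_add2l.
  right; rewrite /recenter; congr center; apply/eqP.
  by rewrite eqEcard nbhd_recenter_sub ?ge_card // eq_yx.
Qed.

Lemma iter_recenter_eventually_const x :
  exists n0, forall n, (n0 <= n)%N -> iter n recenter x = iter n0 recenter x.
Proof. exact: iter_eventually_const recenter_rank_decr x. Qed.

End Lyapunov.

Theorem proposition4 (R : realFieldType) (q N : nat)
    (X : 'I_N -> 'rV[R]_q) (c x0 : 'rV[R]_q) :
  exists n0 : nat, forall n : nat, (n0 <= n)%N ->
    median_shift c X x0 n = median_shift c X x0 n0.
Proof.
pose d x i := l1dist x (X i).
have iterE n : median_shift c X x0 n = iter n (recenter d 1 (Med c X)) x0.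
  by elim: n => //= n ->.
have [n0 const] := iter_recenter_eventually_const (d := d) 1 (Med_sum_l1dist_min c X) x0.
by exists n0 => n le_n; rewrite !iterE; exact: const.
Qed.
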